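(* Let $X=\{x_0,\ldots,x_m\}$ and $X'=\{x'_0,\ldots,x'_q\}$. The multiplicative dynamic feedback product $c\,\check{@}\,d:=c\,\tilde\circ\,\delta_{(d^{\sqcup\!\sqcup-1}\circ c)^{\circ-1}}$ is a right group action of the group $(\mathbb{R}^m_{pi}\langle\langle X'\rangle\rangle,\sqcup\!\sqcup,\mathbb 1)$ on the set $\mathbb{R}^q\langle\langle X\rangle\rangle$; that is, for all $c\in\mathbb{R}^q\langle\langle X\rangle\rangle$ and all purely improper $d_1,d_2\in\mathbb{R}^m\langle\langle X'\rangle\rangle$, $c\,\check{@}\,\mathbb 1=c$ and $(c\,\check{@}\,d_1)\,\check{@}\,d_2=c\,\check{@}\,(d_1\sqcup\!\sqcup d_2)$.
   Context: $\mathbb{R}^\ell\langle\langle X\rangle\rangle$: formal power series in noncommuting letters with coefficients in $\mathbb{R}^\ell$; componentwise products; $\mathbb{R}^m_{pi}\langle\langle X'\rangle\rangle$ is the set of purely improper series (every component has nonzero constant term); $\mathbb 1=[1\cdots1]^t$ viewed as a constant series. Shuffle product $\sqcup\!\sqcup$: bilinear, $(x_i\eta)\sqcup\!\sqcup(x_j\xi)=x_i(\eta\sqcup\!\sqcup x_j\xi)+x_j(x_i\eta\sqcup\!\sqcup\xi)$, $\eta\sqcup\!\sqcup\emptyset=\emptyset\sqcup\!\sqcup\eta=\eta$; $d^{\sqcup\!\sqcup-1}$ the componentwise shuffle inverse. Composition product: $c\circ e=\sum_{\eta\in X'^\ast}(c,\eta)\psi_e(\eta)(\mathbf 1)$ for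 $c\in\mathbb{R}^k\langle\langle X'\rangle\rangle$, $e\in\mathbb{R}^q\langle\langle X\rangle\rangle$, with $\mathbf 1=1\emptyset$, $\psi_e(x'_i)(w)=x_0(e_i\sqcup\!\sqcup w)$, $e_0:=\mathbf 1$, multiplicative (concatenation to composition). Multiplicative mixed composition: $c\,\tilde\circ\,\delta_g=\sum_{\eta\in X^\ast}(c,\eta)\bar\phi_g(\eta)(\mathbf 1)$ with $\bar\phi_g(x_0)(w)=x_0w$, $\bar\phi_g(x_i)(w)=x_i(g_i\sqcup\!\sqcup w)$ ($i\ge1$), multiplicative. For purely improper $g\in\mathbb{R}^m\langle\langle X\rangle\rangle$, $g^{\circ-1}$ is the unique $h\in\mathbb{R}^m\langle\langle X\rangle\rangle$ with $h=g^{\sqcup\!\sqcup-1}\,\tilde\circ\,\delta_h$. *)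

From HB Require Import structures.
From mathcomp Require Import all_boot all_order all_algebra.
From mathcomp Require Import reals.
From Stdlib Require Import ClassicalEpsilon.
Set Implicit Arguments. Unset Strict Implicit. Unset Printing Implicit Defensive.
Import Order.TTheory GRing.Theory Num.Theory.
Local Open Scope ring_scope.

Section Series.
Variable R : realType.

(* scalar formal power series over a finite alphabet A: word -> coefficient *)
Definition ser (A : finType) := seq A -> R.
Definition vser (l : nat) (A : finType) := 'I_l -> ser A.

(* shuffle of two words, as a list (multiset) of words *)
Fixpoint shw (A : Type) (u v : seq A) {struct u} : seq (seq A) :=
  match u with
  | [::] => [:: v]
  | a :: u' =>
      let fix shw_in (v : seq A) : seq (seq A) :=
        match v with
        | [::] => [:: u]
        | b :: v' => map (cons a) (shw u' v) ++ map (cons b) (shw_in v')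
        end in
      shw_in v
  end.

Definition one (A : finType) : ser A := fun nu => if nu is [::] then 1 else 0.

(* bilinear extension of the word shuffle; words u,v with u ⧢ v ∋ nu have
   |u| + |v| = |nu|, so the sum is finite *)
Definition shuffle (A : finType) (c d : ser A) : ser A := fun nu =>
  \sum_(k < (size nu).+1) \sum_(u : k.-tuple A) \sum_(v : (size nu - k).-tuple A)
     c u * d v * (count_mem nu (shw u v))%:R.

Definition lcat (A : finType) (a : A) (s : ser A) : ser A := fun nu =>
  if nu is b :: nu' then (if b == a then s nu' else 0) else 0.

Definition shinv (A : finType) (d : ser A) : ser A :=
  epsilon (inhabits (fun _ => 0)) (fun e => shuffle d e = @one A).

(* sum_{eta} (c,eta) Phi(eta)(1), with Phi extended multiplicatively
   (concatenation to composition).  Every letter action used below prefixes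
   one letter, so Phi(eta)(1) vanishes on words shorter than eta, and the
   coefficient at nu only involves words eta with |eta| <= |nu|. *)
Definition wsum (A B : finType) (c : ser A) (Phi : A -> ser B -> ser B) : ser B :=
  fun nu => \sum_(k < (size nu).+1) \sum_(eta : k.-tuple A)
     c eta * foldr Phi (@one B) eta nu.

Definition vone (l : nat) (A : finType) : vser l A := fun _ => @one A.
Definition vshuffle (l : nat) (A : finType) (c d : vser l A) : vser l A :=
  fun i => shuffle (c i) (d i).
Definition vshinv (l : nat) (A : finType) (d : vser l A) : vser l A :=
  fun i => shinv (d i).
Definition purely_improper (l : nat) (A : finType) (c : vser l A) : Prop :=
  forall i, c i [::] != 0.

(* composition product c ∘ e, c in R^k<<X'>>, X' = {x'_0..x'_q},
   e in R^q<<X>>, X = {x_0..x_m};  psi_e(x'_i)(w) = x_0 (e_i ⧢ w), e_0 = 1 *)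
Definition psi (q m : nat) (e : vser q 'I_m.+1) (a : 'I_q.+1) (w : ser 'I_m.+1)
  : ser 'I_m.+1 :=
  lcat ord0 (shuffle (match unlift ord0 a with None => @one _ | Some i => e i end) w).
Definition comp (k q m : nat) (c : vser k 'I_q.+1) (e : vser q 'I_m.+1)
  : vser k 'I_m.+1 := fun i => wsum (c i) (psi e).

Definition phibar (m : nat) (g : vser m 'I_m.+1) (a : 'I_m.+1) (w : ser 'I_m.+1)
  : ser 'I_m.+1 :=
  match unlift ord0 a with None => lcat a w | Some i => lcat a (shuffle (g i) w) end.
Definition mcomp (l m : nat) (c : vser l 'I_m.+1) (g : vser m 'I_m.+1)
  : vser l 'I_m.+1 := fun i => wsum (c i) (phibar g).

Definition compinv (m : nat) (g : vser m 'I_m.+1) : vser m 'I_m.+1 :=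
  epsilon (inhabits (fun _ _ => 0)) (fun h => h = mcomp (vshinv g) h).

Definition dfb (q m : nat) (c : vser q 'I_m.+1) (d : vser m 'I_q.+1)
  : vser q 'I_m.+1 :=
  mcomp c (compinv (comp (vshinv d) c)).

End Series.

From Pilot Require Import Defs.
From HB Require Import structures.
From mathcomp Require Import all_boot all_order all_algebra.
From mathcomp Require Import reals boolp functions.
From Stdlib Require Import ClassicalEpsilon.
Set Implicit Arguments. Unset Strict Implicit. Unset Printing Implicit Defensive.
Import Order.TTheory GRing.Theory Num.Theory.
Local Open Scope ring_scope.

(* Both identities are read off the closed-loop equation [f = c ~o delta_(d o f)]:
   [c @ d] solves it as soon as [d] is purely improper, and it has at most one
   solution because [f |-> c ~o delta_(d o f)] is contractive for the ultrametric
   "agreement on all words shorter than n", every letter action prefixing a letter.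
   For [d = 1] the series [c] itself solves the loop.  If [e] solves it for [(c, d1)]
   and [f] solves it for [(e, d2)], then [f] solves it for [(c, d1 ⧢ d2)]: this follows
   from [(c ~o delta_a) ~o delta_b = c ~o delta_((a ~o delta_b) ⧢ b)] and
   [(c o e) ~o delta_h = c o (e ~o delta_h)], which hold because both products are
   given by shuffle-algebra morphisms determined by their action on letters. *)

Section WordSums.
Variables (A : finType) (M : nmodType).

Definition sum_words k (f : seq A -> M) : M := \sum_(t : k.-tuple A) f t.

Lemma sum_words0 f : sum_words 0 f = f [::].
Proof. by rewrite /sum_words (big_pred1 [tuple]) // => t; apply/esym/eqP; exact: tuple0. Qed.

Lemma sum_wordsS k f : sum_words k.+1 f = \sum_(a : A) sum_words k (fun t => f (a :: t)).
Proof.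
rewrite /sum_words pair_big (reindex (fun p : A * k.-tuple A => [tuple of p.1 :: p.2])) //=.
exists (fun t : k.+1.-tuple A => (thead t, [tuple of behead t])) => [[a t] _|t _] /=.
  by rewrite theadE; congr pair; apply: val_inj.
by rewrite [in RHS](tuple_eta t).
Qed.

Lemma eq_sum_words k f g :
  {in [pred t | size t == k], f =1 g} -> sum_words k f = sum_words k g.
Proof. by move=> fg; apply: eq_bigr => t _; apply: fg; rewrite inE size_tuple. Qed.

Lemma sum_words_eq0 k f : (forall t, size t = k -> f t = 0) -> sum_words k f = 0.
Proof. by move=> f0; apply: big1 => t _; rewrite f0 ?size_tuple. Qed.

Lemma sum_wordsD k f g : sum_words k (fun t => f t + g t) = sum_words k f + sum_words k g.
Proof. exact: big_split. Qed.

Definition sum_wordpairs n (F : seq A -> seq A -> M) : M :=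
  \sum_(k < n.+1) sum_words k (fun u => sum_words (n - k) (F u)).

Lemma eq_sum_wordpairs n (F G : seq A -> seq A -> M) :
    (forall u v, (size u + size v)%N = n -> F u v = G u v) ->
  sum_wordpairs n F = sum_wordpairs n G.
Proof.
move=> FG; apply: eq_bigr => k _; apply: eq_sum_words => u /eqP su.
by apply: eq_sum_words => v /eqP sv; apply: FG; rewrite su sv subnKC // -ltnS.
Qed.

Lemma sum_wordpairsD n (F G : seq A -> seq A -> M) :
  sum_wordpairs n (fun u v => F u v + G u v) = sum_wordpairs n F + sum_wordpairs n G.
Proof.
rewrite /sum_wordpairs -big_split; apply: eq_bigr => k _ /=.
by rewrite -sum_wordsD; apply: eq_bigr => u _; rewrite -sum_wordsD.
Qed.

Lemma sum_wordpairs_consl n a (F : seq A -> seq A -> M) :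
  sum_wordpairs n.+1 (fun u v => if u is b :: u' then F u' v *+ (b == a) else 0)
  = sum_wordpairs n F.
Proof.
rewrite /sum_wordpairs big_ord_recl sum_words0 sum_words_eq0 ?add0r //.
apply: eq_bigr => k _; rewrite lift0 sum_wordsS subSS (bigD1 a) //= [X in _ + X]big1 ?addr0.
  by apply: eq_sum_words => u _; apply: eq_sum_words => v _; rewrite eqxx mulr1n.
move=> b /negbTE ba; apply: sum_words_eq0 => u _; apply: sum_words_eq0 => v _.
by rewrite ba.
Qed.

Lemma sum_wordpairs_consr n a (F : seq A -> seq A -> M) :
  sum_wordpairs n.+1 (fun u v => if v is b :: v' then F u v' *+ (b == a) else 0)
  = sum_wordpairs n F.
Proof.
rewrite /sum_wordpairs big_ord_recr /= subnn.
rewrite [X in _ + X]sum_words_eq0 ?addr0 => [|u _]; last by rewrite sum_words0.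
apply: eq_bigr => k _; rewrite subSn -1?ltnS //; apply: eq_sum_words => u _.
rewrite sum_wordsS (bigD1 a) //= [X in _ + X]big1 ?addr0.
  by apply: eq_sum_words => v _; rewrite eqxx mulr1n.
by move=> b /negbTE ba; apply: sum_words_eq0 => v _; rewrite ba.
Qed.

End WordSums.

Section Agreement.
Variables (I B T : Type).
Implicit Types (f g : seq B -> T) (F G : I -> seq B -> T).

Definition lderiv (a : B) f : seq B -> T := fun w => f (a :: w).

Definition agree n f g := forall w, (size w < n)%N -> f w = g w.

Lemma agree_lderiv n a f g : agree n.+1 f g -> agree n (lderiv a f) (lderiv a g).
Proof. by move=> fg w lt_wn; apply: fg. Qed.

Lemma agreeW n f g : agree n.+1 f g -> agree n f g.
Proof. by move=> fg w /ltnW; apply: fg. Qed.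

Lemma agreeS n f g : f [::] = g [::] ->
  (forall a, agree n (lderiv a f) (lderiv a g)) -> agree n.+1 f g.
Proof. by move=> fg0 fgS [|a w] //= lt_wn; apply: (fgS a). Qed.

Lemma agree_refl n f : agree n f f.
Proof. by []. Qed.

Lemma agree_eq f g : (forall n, agree n f g) -> f = g.
Proof. by move=> fg; apply/funext => w; apply: (fg (size w).+1). Qed.

Lemma eq_from_agree F G :
  (forall n, (forall i, agree n (F i) (G i)) -> forall i, agree n.+1 (F i) (G i)) -> F = G.
Proof.
move=> FG; have agreeFG n i : agree n (F i) (G i) by elim: n i => // n IH i; apply: FG.
by apply/funext => i; apply: agree_eq => n; apply: agreeFG.
Qed.

Definition contractive (Phi : (I -> seq B -> T) -> I -> seq B -> T) :=
  forall n F G, (forall i, agree n (F i) (G i)) -> forall i, agree n.+1 (Phi F i) (Phi G i).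

Variable Phi : (I -> seq B -> T) -> I -> seq B -> T.
Hypothesis Phi_contractive : contractive Phi.

Lemma contractive_fixpoint_uniq F G : F = Phi F -> G = Phi G -> F = G.
Proof.
by move=> eqF eqG; apply: eq_from_agree => n FG; rewrite eqF eqG; apply: Phi_contractive.
Qed.

(* The Picard iterates stabilise on words shorter than [k] from the [k]-th one on;
   the fixed point is their diagonal. *)
Lemma contractive_fixpoint_exists (x0 : T) : exists F, F = Phi F.
Proof.
pose iterate k := iter k Phi (fun _ _ => x0).
have iterate_agree k j i : agree k (iterate k i) (iterate (k + j)%N i).
  by elim: k i => // k IH i; rewrite addSn; apply: Phi_contractive.
pose F i w := iterate (size w).+1 i w.
have F_agree k i : agree k.+1 (F i) (iterate k.+1 i).
  move=> w lt_wk; rewrite /F.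
  by rewrite (iterate_agree _ (k - size w)%N i w) // addSn subnKC // -ltnS.
exists F; apply/funext => i; apply/funext => w.
rewrite [RHS](Phi_contractive (F_agree (size w)) i) //.
by have := iterate_agree _ 1 i w (ltnSn _); rewrite addn1.
Qed.

End Agreement.

Section AgreementZmod.
Variables (B : Type) (V : zmodType).
Implicit Types f g : seq B -> V.

Lemma agreeD n f f' g g' : agree n f f' -> agree n g g' -> agree n (f + g) (f' + g').
Proof. by move=> ff' gg' w lt_wn; change (f w + g w = f' w + g' w); rewrite ff' ?gg'. Qed.

Lemma agreeB n f f' g g' : agree n f f' -> agree n g g' -> agree n (f - g) (f' - g').
Proof. by move=> ff' gg' w lt_wn; change (f w - g w = f' w - g' w); rewrite ff' ?gg'. Qed.

Lemma agree_sum n (I : Type) (r : seq I) (P : pred I) (F G : I -> seq B -> V) :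
    (forall i, P i -> agree n (F i) (G i)) ->
  agree n (\sum_(i <- r | P i) F i) (\sum_(i <- r | P i) G i).
Proof. by move=> FG w lt_wn; rewrite !fct_sumE; apply: eq_bigr => i /FG ->. Qed.

End AgreementZmod.

Section Shuffle.
Variables (R : realType) (A : finType).
Local Notation ser := (ser R A).
Local Notation one := (@Defs.one R A).
Implicit Types (c d e f g : ser) (a : A) (u v nu : seq A).

Lemma count_shw_cons a nu u v : count_mem (a :: nu) (shw u v) =
  (if u is b :: u' then count_mem nu (shw u' v) * (b == a) else 0)%N +
  (if v is b :: v' then count_mem nu (shw u v') * (b == a) else 0)%N.
Proof.
have count_cons b L : count_mem (a :: nu) (map (cons b) L) = (count_mem nu L * (b == a))%N.
  by elim: L => [|w L IH] //=; rewrite IH eqseq_cons; case: (b == a); rewrite ?muln0 ?muln1.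
case: u => [|b u]; case: v => [|b' v] //=; rewrite ?addn0 ?muln0 //.
- by rewrite eqseq_cons; case: (b' == a); case: (v == nu).
- by case: u => [|? ?] /=; rewrite eqseq_cons; case: (b == a); case: (_ == nu).
- by rewrite count_cat !count_cons.
Qed.

Lemma shuffleE c d nu : shuffle c d nu =
  sum_wordpairs (size nu) (fun u v => c u * d v * (count_mem nu (shw u v))%:R).
Proof. by []. Qed.

Lemma shuffle_nil c d : shuffle c d [::] = c [::] * d [::].
Proof. by rewrite shuffleE /sum_wordpairs big_ord1 /= !sum_words0 /= mulr1. Qed.

Lemma shuffle_cons c d a nu :
  shuffle c d (a :: nu) = shuffle (lderiv a c) d nu + shuffle c (lderiv a d) nu.
Proof.
rewrite !shuffleE -[X in _ = X + _](sum_wordpairs_consl _ a).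
rewrite -[X in _ = _ + X](sum_wordpairs_consr _ a) -sum_wordpairsD.
apply: eq_sum_wordpairs => u v _; rewrite count_shw_cons natrD mulrDr.
by congr (_ + _); [case: u => [|b u] | case: v => [|b v]];
  rewrite ?mulr0 // natrM mulr_natr; case: eqP => [->|]; rewrite ?mulr1 ?mulr0.
Qed.

Lemma shuffle_agree n c d c' d' : agree n c c' -> agree n d d' ->
  agree n (shuffle c d) (shuffle c' d').
Proof.
elim: n c d c' d' => // n IH c d c' d' cc' dd'.
apply: agreeS => [|a w lt_wn]; first by rewrite !shuffle_nil (cc' [::]) ?(dd' [::]).
rewrite /lderiv !shuffle_cons.
congr (_ + _); apply: IH => //; by [apply: agree_lderiv | apply: agreeW].
Qed.

Lemma lderivB a f g : lderiv a (f - g) = lderiv a f - lderiv a g.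
Proof. by []. Qed.

Lemma lderiv_shuffle a c d :
  lderiv a (shuffle c d) = shuffle (lderiv a c) d + shuffle c (lderiv a d).
Proof. by apply/funext => nu; rewrite /lderiv shuffle_cons. Qed.

Lemma shuffleBr c : zmod_morphism (shuffle c).
Proof.
suff shuffleB nu d f g : shuffle d (f - g) nu = shuffle d f nu - shuffle d g nu.
  by move=> f g; apply/funext => nu; apply: shuffleB.
elim: nu d f g => [|a nu IH] d f g; first by rewrite !shuffle_nil -mulrBr.
by rewrite !shuffle_cons lderivB !IH addrACA opprD.
Qed.

HB.instance Definition _ c := GRing.isZmodMorphism.Build ser ser (shuffle c) (shuffleBr c).

Lemma shuffleC c d : shuffle c d = shuffle d c.
Proof.
apply/funext => nu; elim: nu c d => [|a nu IH] c d; first by rewrite !shuffle_nil mulrC.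
by rewrite !shuffle_cons IH [shuffle c _ _]IH addrC.
Qed.

Lemma shuffle0l d : shuffle 0 d = 0.
Proof. by rewrite shuffleC raddf0. Qed.

Lemma shuffleDl c c' d : shuffle (c + c') d = shuffle c d + shuffle c' d.
Proof. by rewrite shuffleC raddfD /= !(shuffleC d). Qed.

Lemma shuffle_suml (I : Type) (r : seq I) (P : pred I) (F : I -> ser) d :
  shuffle (\sum_(i <- r | P i) F i) d = \sum_(i <- r | P i) shuffle (F i) d.
Proof. by rewrite shuffleC raddf_sum; apply: eq_bigr => i _; rewrite shuffleC. Qed.

Lemma shuffleZr k c f nu : shuffle c (k \*o f) nu = k * shuffle c f nu.
Proof.
elim: nu c f => [|a nu IH] c f; first by rewrite !shuffle_nil mulrCA.
by rewrite !shuffle_cons (_ : lderiv a (k \*o f) = k \*o lderiv a f) // !IH mulrDr.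
Qed.

Lemma lderiv_one a : lderiv a one = 0.
Proof. by apply/funext. Qed.

Lemma shuffle1l d : shuffle one d = d.
Proof.
apply/funext => nu; elim: nu d => [|a nu IH] d; first by rewrite shuffle_nil mul1r.
by rewrite shuffle_cons lderiv_one shuffle0l IH add0r.
Qed.

Lemma shuffle1r c : shuffle c one = c.
Proof. by rewrite shuffleC shuffle1l. Qed.

Lemma shuffleA c d e : shuffle c (shuffle d e) = shuffle (shuffle c d) e.
Proof.
suff agreeA n : forall c d e, agree n (shuffle c (shuffle d e)) (shuffle (shuffle c d) e).
  by apply: agree_eq => n; apply: agreeA.
elim: n => // n IH {}c {}d {}e; apply: agreeS => [|a]; first by rewrite !shuffle_nil mulrA.
rewrite !lderiv_shuffle raddfD /= shuffleDl -addrA.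
by apply: agreeD => //; apply: agreeD.
Qed.

(* Differentiating [d ⧢ e = 1] and using it again gives
   [lderiv a e = - lderiv a d ⧢ (e ⧢ e)]: a contractive recursion for [e],
   with constant term [d [::]^-1]. *)
Lemma shuffle_inverse_exists d : d [::] != 0 -> exists e, shuffle d e = one.
Proof.
move=> d0.
pose Phi (F : unit -> ser) (_ : unit) : ser := fun w =>
  if w is a :: nu then - shuffle (lderiv a d) (shuffle (F tt) (F tt)) nu else (d [::])^-1.
have Phi_contractive : contractive Phi.
  move=> n F G FG [] [|a w] //=; rewrite ltnS => lt_wn; congr (- _).
  exact: (shuffle_agree (agree_refl _) (shuffle_agree (FG tt) (FG tt)) lt_wn).
have [F FPhi] := contractive_fixpoint_exists Phi_contractive 0.
pose e := F tt.
have e_nil : e [::] = (d [::])^-1 by rewrite /e FPhi.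
have e_lderiv a : lderiv a e = - shuffle (lderiv a d) (shuffle e e).
  by apply/funext => w; rewrite /lderiv /e {1}FPhi.
exists e; apply: agree_eq; elim=> // n IH.
apply: agreeS => [|a]; first by rewrite shuffle_nil e_nil mulfV.
rewrite lderiv_shuffle e_lderiv raddfN /= lderiv_one -(subrr (shuffle (lderiv a d) e)).
apply: agreeB => //.
rewrite (shuffleC (lderiv a d)) -shuffleA shuffleA (shuffleC e (lderiv a d)).
by rewrite -[X in agree _ _ X]shuffle1l; apply: shuffle_agree.
Qed.

Lemma shinv_spec d : d [::] != 0 -> shuffle d (shinv d) = one.
Proof.
by move=> /shuffle_inverse_exists; apply: (epsilon_spec _ (fun e => shuffle d e = one)).
Qed.

Lemma shinv_unique d e : shuffle d e = one -> shinv d = e.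
Proof.
move=> de; have d_shinv : shuffle d (shinv d) = one.
  by apply: (epsilon_spec _ (fun e => shuffle d e = one)); exists e.
by rewrite -[shinv d]shuffle1l -de (shuffleC d) -shuffleA d_shinv shuffle1r.
Qed.

End Shuffle.

Section ShuffleActions.
Variables (R : realType) (A B : finType) (l : A -> B) (K : A -> ser R B).
Local Notation one := (@Defs.one R _).
Implicit Types (c s t : ser R A) (a : B) (b : A) (nu v : seq B).

(* The letter actions [phibar g] and [psi e] of the mixed and plain composition
   products both have this form (see [mcomp_wsumE] and [comp_wsumE]). *)
Definition shuffle_act b (w : ser R B) : ser R B := lcat (l b) (shuffle (K b) w).
Local Notation act eta := (foldr shuffle_act one eta).
Local Notation W s := (wsum s shuffle_act).

Lemma act_agree0 (eta : seq A) : agree (size eta) (act eta) 0.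
Proof.
elim: eta => [|b eta IH] // [|a v] //=; rewrite ltnS => lt_v_eta.
rewrite /shuffle_act /lcat (shuffle_agree (agree_refl _) IH lt_v_eta) raddf0.
by case: ifP.
Qed.

Lemma wsumE c v :
  W c v = \sum_(k < (size v).+1) sum_words k (fun eta => c eta * act eta v).
Proof. by []. Qed.

Lemma wsum_trunc c v N : (size v < N)%N ->
  W c v = \sum_(k < N) sum_words k (fun eta => c eta * act eta v).
Proof.
move=> lt_vN; rewrite wsumE.
rewrite (big_ord_widen N (fun k => sum_words k (fun eta => c eta * act eta v))) //.
rewrite [RHS](bigID (fun k : 'I_N => (k < (size v).+1)%N)) /= [X in _ = _ + X]big1 ?addr0 //.
move=> k; rewrite -leqNgt => lt_vk; apply: sum_words_eq0 => eta size_eta.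
by rewrite (@act_agree0 eta) ?size_eta // mulr0.
Qed.

Lemma wsum_nil c : W c [::] = c [::].
Proof. by rewrite wsumE big_ord1 /= sum_words0 /= mulr1. Qed.

Lemma wsum_lderiv c a :
  lderiv a (W c) = \sum_(b | a == l b) shuffle (K b) (W (lderiv b c)).
Proof.
apply/funext => nu; rewrite fct_sumE [LHS]/lderiv.
rewrite wsumE big_ord_recl sum_words0 /= mulr0 add0r.
under eq_bigr => i _ do rewrite (_ : bump 0 i = i.+1) // sum_wordsS.
rewrite exchange_big (bigID (fun b => a == l b)) /= [X in _ + X]big1 ?addr0; last first.
  move=> b /negbTE ab; apply: big1 => i _; apply: sum_words_eq0 => t _.
  by rewrite /= /shuffle_act /lcat ab mulr0.
apply: eq_bigr => b ab.
(* On words no longer than [nu], [W (lderiv b c)] is a fixed finite combination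
   of the [act t], through which [shuffle (K b)] distributes. *)
have W_agree : agree (size nu).+1 (W (lderiv b c))
    (\sum_(i < (size nu).+1) \sum_(t : i.-tuple A) c (b :: t) \*o act t).
  move=> v lt_v; rewrite (wsum_trunc _ lt_v) !fct_sumE.
  by apply: eq_bigr => i _; rewrite fct_sumE.
rewrite (shuffle_agree (agree_refl _) W_agree (ltnSn _)) raddf_sum /= fct_sumE.
apply: eq_bigr => i _; rewrite raddf_sum /= fct_sumE /sum_words; apply: eq_bigr => t _.
by rewrite shuffleZr ab.
Qed.

Lemma wsum_unique (Phi : ser R A -> ser R B) :
    (forall s, Phi s [::] = s [::]) ->
    (forall s a, lderiv a (Phi s) = \sum_(b | a == l b) shuffle (K b) (Phi (lderiv b s))) ->
  forall s, Phi s = W s.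
Proof.
move=> Phi_nil Phi_lderiv; suff -> : Phi = (fun s => W s) by [].
apply: eq_from_agree => n IH s; apply: agreeS => [|a]; first by rewrite Phi_nil wsum_nil.
rewrite Phi_lderiv wsum_lderiv; apply: agree_sum => b _.
exact: shuffle_agree (agree_refl _) (IH _).
Qed.

Lemma wsum0 : W 0 = 0.
Proof.
apply/funext => v; rewrite wsumE big1 // => k _.
by apply: sum_words_eq0 => eta _; rewrite mul0r.
Qed.

Lemma wsumD s t : W (s + t) = W s + W t.
Proof.
apply/funext => v; change (W (s + t) v = W s v + W t v).
rewrite !wsumE -big_split; apply: eq_bigr => k _ /=.
by rewrite -sum_wordsD; apply: eq_sum_words => eta _; rewrite mulrDl.
Qed.

Lemma wsum_sum (I : Type) (r : seq I) (P : pred I) (F : I -> ser R A) :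
  W (\sum_(i <- r | P i) F i) = \sum_(i <- r | P i) W (F i).
Proof.
apply/funext => v; rewrite !fct_sumE /= wsumE.
under [RHS]eq_bigr => i _ do rewrite wsumE.
rewrite [RHS]exchange_big; apply: eq_bigr => k _ /=.
by rewrite /sum_words [RHS]exchange_big; apply: eq_bigr => t _ /=; rewrite mulr_suml.
Qed.

Lemma wsum_one : W one = one.
Proof.
apply: agree_eq => -[|n] //; apply: agreeS => [|a]; first exact: wsum_nil.
by rewrite wsum_lderiv lderiv_one big1 // => b _; rewrite lderiv_one wsum0 raddf0.
Qed.

Lemma wsum_shuffle s t : W (shuffle s t) = shuffle (W s) (W t).
Proof.
suff agree_shuffle n : forall s t, agree n (W (shuffle s t)) (shuffle (W s) (W t)).
  by apply: agree_eq => n; apply: agree_shuffle.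
elim: n => // n IH {}s {}t; apply: agreeS => [|a].
  by rewrite wsum_nil !shuffle_nil !wsum_nil.
rewrite wsum_lderiv lderiv_shuffle !wsum_lderiv shuffle_suml raddf_sum /= -big_split.
apply: agree_sum => b _ /=.
rewrite lderiv_shuffle wsumD raddfD /= -shuffleA [shuffle (W s) _]shuffleA (shuffleC (W s)).
by rewrite -shuffleA; apply: agreeD; apply: shuffle_agree (agree_refl _) (IH _ _).
Qed.

End ShuffleActions.

Lemma wsum_agree (R : realType) (A B : finType) (l : A -> B) (K K' : A -> ser R B) n s :
    (forall b, agree n (K b) (K' b)) ->
  agree n.+1 (wsum s (shuffle_act l K)) (wsum s (shuffle_act l K')).
Proof.
elim: n s => [|n IH] s KK'; apply: agreeS => [|a]; rewrite ?wsum_nil //.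
rewrite !wsum_lderiv; apply: agree_sum => b _.
by apply: shuffle_agree (KK' b) (IH _ _) => b'; apply: agreeW.
Qed.

Section Compositions.
Variable R : realType.
Local Notation one := (@Defs.one R _).

(* The convention [g_0 := 1] for the letter [x_0]. *)
Definition pad1 (n : nat) (B : finType) (g : vser R n B) (a : 'I_n.+1) : ser R B :=
  if unlift ord0 a is Some i then g i else one.

Lemma pad1_agree n (B : finType) (g g' : vser R n B) k :
  (forall i, agree k (g i) (g' i)) -> forall a, agree k (pad1 g a) (pad1 g' a).
Proof. by move=> gg' a; rewrite /pad1; case: (unlift ord0 a). Qed.

Local Notation smcomp g s := (wsum s (shuffle_act id (pad1 g))).
Local Notation scomp e s := (wsum s (shuffle_act (fun=> ord0) (pad1 e))).

Lemma mcomp_wsumE l m (c : vser R l 'I_m.+1) g : mcomp c g = fun i => smcomp g (c i).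
Proof.
rewrite /mcomp; have -> : phibar g = shuffle_act id (pad1 g).
  apply/funext => a; apply/funext => w; rewrite /phibar /shuffle_act /pad1.
  by case: (unlift ord0 a); rewrite ?shuffle1l.
by [].
Qed.

Lemma comp_wsumE k q m (c : vser R k 'I_q.+1) (e : vser R q 'I_m.+1) :
  Defs.comp c e = fun i => scomp e (c i).
Proof. by []. Qed.

Section MixedComposition.
Variable m : nat.
Implicit Types (g h : vser R m 'I_m.+1) (s : ser R 'I_m.+1).

Lemma smcomp_lderiv g s a :
  lderiv a (smcomp g s) = shuffle (pad1 g a) (smcomp g (lderiv a s)).
Proof. by rewrite wsum_lderiv (big_pred1 a) // => b; rewrite eq_sym. Qed.

Lemma smcomp_unique g (Phi : ser R 'I_m.+1 -> ser R 'I_m.+1) :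
    (forall s, Phi s [::] = s [::]) ->
    (forall s a, lderiv a (Phi s) = shuffle (pad1 g a) (Phi (lderiv a s))) ->
  forall s, Phi s = smcomp g s.
Proof.
move=> Phi_nil Phi_lderiv; apply: wsum_unique => // s a.
by rewrite Phi_lderiv (big_pred1 a) // => b; rewrite eq_sym.
Qed.

Lemma smcomp_agree n g g' s :
  (forall i, agree n (g i) (g' i)) -> agree n.+1 (smcomp g s) (smcomp g' s).
Proof. by move=> gg'; apply: wsum_agree; apply: pad1_agree. Qed.

Lemma smcomp_vone s : smcomp (@vone R m _) s = s.
Proof.
symmetry; apply: (@smcomp_unique _ id) => // {}s a.
by rewrite /pad1; case: (unlift ord0 a) => [i|]; rewrite shuffle1l.
Qed.

Lemma smcomp_smcomp g h s :
  smcomp h (smcomp g s) = smcomp (fun i => shuffle (smcomp h (g i)) (h i)) s.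
Proof.
apply: (smcomp_unique (Phi := fun s => smcomp h (smcomp g s))) => [{}s|{}s a].
  by rewrite !wsum_nil.
rewrite !smcomp_lderiv wsum_shuffle shuffleA (shuffleC (pad1 h a)); congr (shuffle _ _).
by rewrite /pad1; case: (unlift ord0 a) => // ; rewrite wsum_one shuffle1l.
Qed.

End MixedComposition.

Lemma pad1_ord0 n (B : finType) (g : vser R n B) : pad1 g ord0 = one.
Proof. by rewrite /pad1 unlift_none. Qed.

Lemma scomp_agree n q m (e e' : vser R q 'I_m.+1) s :
  (forall i, agree n (e i) (e' i)) -> agree n.+1 (scomp e s) (scomp e' s).
Proof. by move=> ee'; apply: wsum_agree; apply: pad1_agree. Qed.

Lemma smcomp_scomp q m (h : vser R m 'I_m.+1) (e : vser R q 'I_m.+1) s :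
  smcomp h (scomp e s) = scomp (fun i => smcomp h (e i)) s.
Proof.
apply: (wsum_unique (Phi := fun s => smcomp h (scomp e s))) => [{}s|{}s a].
  by rewrite !wsum_nil.
rewrite smcomp_lderiv wsum_lderiv /=; case: (boolP (a == ord0)) => [/eqP->|a0]; last first.
  by rewrite !big_pred0 ?wsum0 ?raddf0 // => b; apply/negbTE.
rewrite pad1_ord0 shuffle1l wsum_sum; apply: eq_bigr => b _.
rewrite wsum_shuffle; congr (shuffle _ _).
by rewrite /pad1; case: (unlift ord0 b) => //; rewrite wsum_one.
Qed.

Section VectorIdentities.
Variables q m : nat.
Local Notation X := 'I_m.+1.
Local Notation X' := 'I_q.+1.

Lemma mcomp_vone l (c : vser R l X) : mcomp c (@vone R m X) = c.
Proof. by rewrite mcomp_wsumE; apply/funext => i; rewrite smcomp_vone. Qed.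

Lemma comp_vone k (e : vser R q X) : Defs.comp (@vone R k X') e = @vone R k X.
Proof. by apply/funext => i; rewrite comp_wsumE wsum_one. Qed.

Lemma mcomp_mcomp l (c : vser R l X) (g h : vser R m X) :
  mcomp (mcomp c g) h = mcomp c (fun i => shuffle (mcomp g h i) (h i)).
Proof. by rewrite !mcomp_wsumE; apply/funext => i; rewrite smcomp_smcomp. Qed.

Lemma mcomp_comp k (c : vser R k X') (e : vser R q X) (h : vser R m X) :
  mcomp (Defs.comp c e) h = Defs.comp c (mcomp e h).
Proof. by rewrite !mcomp_wsumE !comp_wsumE; apply/funext => i; rewrite smcomp_scomp. Qed.

Lemma comp_vshuffle k (c d : vser R k X') (e : vser R q X) :
  Defs.comp (vshuffle c d) e = vshuffle (Defs.comp c e) (Defs.comp d e).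
Proof. by apply/funext => i; rewrite comp_wsumE wsum_shuffle. Qed.

Lemma vshinv_comp (d : vser R m X') (c : vser R q X) : purely_improper d ->
  vshinv (Defs.comp (vshinv d) c) = Defs.comp d c.
Proof.
move=> d_pi; apply/funext => i; apply: shinv_unique.
by rewrite comp_wsumE -wsum_shuffle shuffleC shinv_spec ?wsum_one.
Qed.

End VectorIdentities.
End Compositions.

Section Feedback.
Variables (R : realType) (m q : nat).
Local Notation X := 'I_m.+1.
Local Notation X' := 'I_q.+1.

Definition closed_loop (c : vser R q X) (d : vser R m X') (f : vser R q X) :=
  f = mcomp c (Defs.comp d f).

Lemma closed_loop_unique c d f f' : closed_loop c d f -> closed_loop c d f' -> f = f'.
Proof.
apply: (@contractive_fixpoint_uniq _ _ _ (fun f => mcomp c (Defs.comp d f))) => n e e' ee' i.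
rewrite !mcomp_wsumE !comp_wsumE; apply: smcomp_agree => j.
by apply: agreeW; apply: scomp_agree.
Qed.

Lemma compinv_fixpoint (g : vser R m X) : compinv g = mcomp (vshinv g) (compinv g).
Proof.
apply: (epsilon_spec _ (fun h => h = mcomp (vshinv g) h)).
apply: (contractive_fixpoint_exists _ 0) => n h h' hh' i.
by rewrite !mcomp_wsumE; apply: smcomp_agree.
Qed.

Lemma dfb_closed_loop c d : purely_improper d -> closed_loop c d (dfb c d).
Proof.
by move=> d_pi; rewrite /closed_loop /dfb -mcomp_comp -(vshinv_comp c d_pi) -compinv_fixpoint.
Qed.

Lemma closed_loop_vone c : closed_loop c (@vone R m X') c.
Proof. by rewrite /closed_loop comp_vone mcomp_vone. Qed.

Lemma closed_loop_vshuffle c d1 d2 e f :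
  closed_loop c d1 e -> closed_loop e d2 f -> closed_loop c (vshuffle d1 d2) f.
Proof.
rewrite /closed_loop => e_loop f_loop.
by rewrite comp_vshuffle {1}f_loop {1}e_loop mcomp_mcomp mcomp_comp -f_loop.
Qed.

End Feedback.

Lemma purely_improper_vshuffle (R : realType) l (A : finType) (d1 d2 : vser R l A) :
  purely_improper d1 -> purely_improper d2 -> purely_improper (vshuffle d1 d2).
Proof. by move=> d1_pi d2_pi i; rewrite /vshuffle shuffle_nil mulf_neq0. Qed.

Theorem theorem16 (R : realType) (m q : nat) :
  (forall c : vser R q 'I_m.+1, dfb c (@vone R m 'I_q.+1) = c) /\
  (forall (c : vser R q 'I_m.+1) (d1 d2 : vser R m 'I_q.+1),
     purely_improper d1 -> purely_improper d2 ->
     dfb (dfb c d1) d2 = dfb c (vshuffle d1 d2)).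
Proof.
have vone_pi : purely_improper (@vone R m 'I_q.+1) by move=> i; apply: oner_neq0.
split=> [c | c d1 d2 d1_pi d2_pi].
  exact: closed_loop_unique (dfb_closed_loop c vone_pi) (closed_loop_vone c).
apply: closed_loop_unique (dfb_closed_loop _ (purely_improper_vshuffle d1_pi d2_pi)).
exact: closed_loop_vshuffle (dfb_closed_loop c d1_pi) (dfb_closed_loop _ d2_pi).
Qed.
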